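(* Let $X$ be a finite set with a probability measure $\mu$, let $f\in\Delta_X$, let $\mathcal F_0$ be a finite collection of real-valued functions on $X$, and let $\delta>0$. Consider the dual optimization problem \[ \text{maximize } \; -\log\Big(\mathbb E_\mu \exp\Big(\sum_{\varphi\in\mathcal F_0}\lambda_\varphi\varphi\Big)\Big) + \sum_{\varphi\in\mathcal F_0}\lambda_\varphi\big(\langle f,\varphi\rangle - \delta\big) \quad\text{subject to } \lambda_\varphi\ge 0 \;\;\forall\varphi\in\mathcal F_0. \] If $\{\lambda^*_\varphi\}$ is an optimal solution of this problem, then \[ \sum_{\varphi\in\mathcal F_0}\lambda^*_\varphi \le \frac{\mathrm{Ent}_\mu(f)}{\delta}. \]
   Context: $\langle f,g\rangle = \sum_{x\in X}\mu(x)f(x)g(x)$, $\mathbb E_\mu h = \sum_x\mu(x)h(x)$, $\Delta_X = \{f:X\to[0,\infty) : \mathbb E_\mu f = 1\}$, and $\mathrm{Ent}_\mu(f) = \mathbb E_\mu[f\log f]$ (with $0\log 0=0$). The displayed problem is the Lagrangian dual of the primal problem: minimize $\mathrm{Ent}_\mu(g)$ over $g\in\Delta_X$ subject to $\langle g,\varphi\rangle\ge\langle f,\varphi\rangle-\delta$ for all $\varphi\in\mathcal F_0$. *)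

From HB Require Import structures.
From mathcomp Require Import all_boot all_order all_algebra.
From mathcomp Require Import finmap.
From mathcomp Require Import all_classical all_reals all_analysis.
Set Implicit Arguments. Unset Strict Implicit. Unset Printing Implicit Defensive.
Import Order.TTheory GRing.Theory Num.Theory.
Local Open Scope ring_scope.
Local Open Scope fset_scope.

Definition is_prob {R : realType} {X : finType} (mu : X -> R) : Prop :=
  (forall x, 0 <= mu x) /\ \sum_(x : X) mu x = 1.

Definition ipr {R : realType} {X : finType} (mu : X -> R) (f g : X -> R) : R :=
  \sum_(x : X) mu x * f x * g x.

Definition Emu {R : realType} {X : finType} (mu : X -> R) (h : X -> R) : R :=
  \sum_(x : X) mu x * h x.

Definition in_Delta {R : realType} {X : finType} (mu : X -> R) (f : X -> R) : Prop :=
  (forall x, 0 <= f x) /\ Emu mu f = 1.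

Definition xlogx {R : realType} (t : R) : R := if t == 0 then 0 else t * ln t.

Definition Ent {R : realType} {X : finType} (mu : X -> R) (f : X -> R) : R :=
  Emu mu (fun x => xlogx (f x)).

Definition dual_obj {R : realType} {X : finType} (mu : X -> R) (f : X -> R)
    (F0 : {fset {ffun X -> R}}) (delta : R) (lam : {ffun X -> R} -> R) : R :=
  - ln (Emu mu (fun x => expR (\sum_(phi <- F0) lam phi * phi x)))
  + \sum_(phi <- F0) lam phi * (ipr mu f phi - delta).

Definition dual_feasible {R : realType} {X : finType}
    (F0 : {fset {ffun X -> R}}) (lam : {ffun X -> R} -> R) : Prop :=
  forall phi, phi \in F0 -> 0 <= lam phi.

Definition dual_optimal {R : realType} {X : finType} (mu : X -> R) (f : X -> R)
    (F0 : {fset {ffun X -> R}}) (delta : R) (lam : {ffun X -> R} -> R) : Prop :=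
  dual_feasible F0 lam /\
  forall lam', dual_feasible F0 lam' ->
    dual_obj mu f F0 delta lam' <= dual_obj mu f F0 delta lam.

From HB Require Import structures.
From mathcomp Require Import all_boot all_order all_algebra.
From mathcomp Require Import finmap.
From mathcomp Require Import all_classical all_reals all_analysis.
From mathcomp Require Import ring lra.
Set Implicit Arguments. Unset Strict Implicit. Unset Printing Implicit Defensive.
Import Order.TTheory GRing.Theory Num.Theory.
Local Open Scope ring_scope.
Local Open Scope fset_scope.

(* The dual objective vanishes at lam = 0, so an optimal lam* has nonnegative
   objective.  Writing h = sum_phi lam*_phi phi, that objective equals
   E_mu[f h] - log E_mu[exp h] - delta sum_phi lam*_phi, and the Gibbs
   variational principle E_mu[f h] - Ent_mu(f) <= log E_mu[exp h] bounds it by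
   Ent_mu(f) - delta sum_phi lam*_phi. *)

Lemma ln_le_sub1 (R : realType) (t : R) : 0 < t -> ln t <= t - 1.
Proof.
move=> t_gt0; have := expR_ge1Dx (ln t).
by rewrite lnK ?posrE // -lerBrDl.
Qed.

(* Fenchel-Young inequality for t log t, whose convex conjugate is exp (a - 1). *)
Lemma xlogx_young (R : realType) (t a : R) :
  0 <= t -> 0 < a -> t * ln a - xlogx t <= a - t.
Proof.
move=> t_ge0 a_gt0; rewrite /xlogx.
have [->|t_neq0] := eqVneq t 0; first by rewrite mul0r !subr0 ltW.
have t_gt0 : 0 < t by rewrite lt_neqAle eq_sym t_neq0.
rewrite -mulrBr -ln_div ?posrE //.
have := ler_wpM2l (ltW t_gt0) (@ln_le_sub1 _ _ (divr_gt0 a_gt0 t_gt0)).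
by rewrite mulrBr mulr1 mulrCA divff ?gt_eqF ?mulr1.
Qed.

Section Expectation.
Variables (R : realType) (X : finType) (mu : X -> R).
Hypothesis mu_prob : is_prob mu.

Lemma Emu_gt0 (h : X -> R) : (forall x, 0 < h x) -> 0 < Emu mu h.
Proof.
case: mu_prob => mu_ge0 mu_sum1 h_gt0.
have [x mux_gt0] : exists x, 0 < mu x.
  apply/not_existsP => mu_npos.
  have : \sum_(x : X) mu x <= 0.
    by apply: sumr_le0 => x _; rewrite leNgt; apply/negP/mu_npos.
  by rewrite mu_sum1 ler10.
rewrite /Emu (bigD1 x) //= ltr_pwDl ?mulr_gt0 //.
by apply: sumr_ge0 => y _; rewrite mulr_ge0 // ltW.
Qed.

Lemma Emu_cst (c : R) : Emu mu (fun=> c) = c.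
Proof. by rewrite /Emu -mulr_suml mu_prob.2 mul1r. Qed.

Lemma Emu_mul_sub_Ent_le_ln_Emu_expR (f h : X -> R) : in_Delta mu f ->
  Emu mu (fun x => f x * h x) - Ent mu f <= ln (Emu mu (fun x => expR (h x))).
Proof.
case=> f_ge0 f_mean1; set Z := Emu mu (fun x => expR (h x)).
have Z_gt0 : 0 < Z by apply: Emu_gt0 => x; exact: expR_gt0.
have ln_expR_div x : ln (expR (h x) / Z) = h x - ln Z.
  by rewrite ln_div ?posrE ?expR_gt0 // expRK.
have pointwise x : mu x * (f x * (h x - ln Z) - xlogx (f x))
    <= mu x * (expR (h x) / Z - f x).
  by rewrite ler_wpM2l ?mu_prob.1 // -ln_expR_div xlogx_young ?divr_gt0 ?expR_gt0.
have : \sum_(x : X) mu x * (f x * (h x - ln Z) - xlogx (f x))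
    <= \sum_(x : X) mu x * (expR (h x) / Z - f x).
  by apply: ler_sum => x _; exact: pointwise.
have -> : \sum_(x : X) mu x * (expR (h x) / Z - f x) = Z / Z - Emu mu f.
  by rewrite /Emu /Z mulr_suml -sumrB; apply: eq_bigr => x _; ring.
have -> : \sum_(x : X) mu x * (f x * (h x - ln Z) - xlogx (f x))
    = Emu mu (fun x => f x * h x) - Ent mu f - ln Z * Emu mu f.
  by rewrite /Emu /Ent mulr_sumr -!sumrB; apply: eq_bigr => x _; ring.
rewrite f_mean1 divff ?gt_eqF //; lra.
Qed.

End Expectation.

Definition dual_potential (R : realType) (X : finType)
    (F0 : {fset {ffun X -> R}}) (lam : {ffun X -> R} -> R) (x : X) : R :=
  \sum_(phi <- F0) lam phi * phi x.

Lemma dual_objE (R : realType) (X : finType) (mu f : X -> R)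
    (F0 : {fset {ffun X -> R}}) (delta : R) (lam : {ffun X -> R} -> R) :
  let h := dual_potential F0 lam in
  dual_obj mu f F0 delta lam =
    Emu mu (fun x => f x * h x) - ln (Emu mu (fun x => expR (h x)))
    - (\sum_(phi <- F0) lam phi) * delta.
Proof.
rewrite /dual_obj /dual_potential /=.
under eq_bigr do rewrite mulrBr.
rewrite sumrB -mulr_suml.
have -> : \sum_(phi <- F0) lam phi * ipr mu f phi
    = Emu mu (fun x => f x * \sum_(phi <- F0) lam phi * phi x).
  rewrite /ipr /Emu; under [RHS]eq_bigr do rewrite !mulr_sumr.
  rewrite [RHS]exchange_big /=; apply: eq_bigr => phi _.
  by rewrite mulr_sumr; apply: eq_bigr => x _; ring.
ring.
Qed.

Lemma dual_obj0 (R : realType) (X : finType) (mu f : X -> R)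
    (F0 : {fset {ffun X -> R}}) (delta : R) :
  is_prob mu -> dual_obj mu f F0 delta (fun=> 0) = 0.
Proof.
move=> mu_prob; rewrite dual_objE.
have -> : dual_potential F0 (fun=> 0) = fun=> 0.
  by apply/funext => x; rewrite /dual_potential big1 // => phi _; rewrite mul0r.
under eq_fun do rewrite mulr0.
rewrite expR0 !Emu_cst // ln1 big1 // mul0r; lra.
Qed.

Theorem lemma2p3 (R : realType) (X : finType) (mu : X -> R) (f : X -> R)
    (F0 : {fset {ffun X -> R}}) (delta : R) (lamstar : {ffun X -> R} -> R) :
  is_prob mu -> in_Delta mu f -> 0 < delta ->
  dual_optimal mu f F0 delta lamstar ->
  \sum_(phi <- F0) lamstar phi <= Ent mu f / delta.
Proof.
move=> mu_prob f_Delta delta_gt0 [_ lamstar_max].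
have := lamstar_max _ (fun _ _ => lexx 0).
rewrite dual_obj0 // dual_objE.
have := Emu_mul_sub_Ent_le_ln_Emu_expR mu_prob (dual_potential F0 lamstar) f_Delta.
rewrite ler_pdivlMr //; lra.
Qed.
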